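(* Let $(\lambda,\vartheta,\zeta_0)$ be fluid model data as in the context, let $\zeta(\cdot)$ be a measure valued fluid model solution with total mass $z(\cdot)$, and let $t_0>0$. Define $z(t_0,t)=z(t_0+t)$ and $S(t_0,u,v)=\int_u^v z(t_0,r)^{-1}dr$. Then for all $t\ge0$, $$z(t_0,t)=\zeta(t_0)\big([S(t_0,0,t),\infty]\times[t,\infty]\big)+\lambda\int_0^t\mathbf P\big(B\ge S(t_0,s,t);\,D\ge t-s\big)ds.$$
   Context: $\overline{\mathbb R}_+=[0,\infty]$; $\mathbf M_1$ the finite nonnegative Borel measures on $\overline{\mathbb R}_+^2$ with the weak topology. Fluid model data: $\lambda>0$; $\vartheta$ a Borel probability measure on $\overline{\mathbb R}_+^2$ with $\vartheta(\{0\}\times\overline{\mathbb R}_+)=\vartheta(\overline{\mathbb R}_+\times\{0\})=\vartheta(\{(\infty,\infty)\})=0$, $(B,D)$ a random pair with law $\vartheta$, $\rho=\lambda\mathbf E[B]>1$; $\zeta_0\in\mathbf M_1$ with marginals free of atoms in $[0,\infty)$. Corner sets $\mathcal C=\{[x,\infty)\times[y,\infty):x,y\in[0,\infty)\}\cup\{[x,\infty]\times[y,\infty]:x,y\in\overline{\mathbb R}_+\}$. A measure valued fluid model solution is a continuous $\zeta:[0,\infty)\to\mathbf M_1$ with total mass $z(t)=\zeta(t)(\overline{\mathbb R}_+^2)$, $S(u,v)=\int_u^vz(s)^{-1}ds$, such that $\inf_{t>a}z(t)>0$ for all $a>0$ and $\zeta(t)(C)=\zeta_0(C+(S(0,t),t))+\lambda\int_0^t\vartheta(C+(S(s,t),t-s))ds$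 for all $C\in\mathcal C$, $t\ge0$ ($A+w=\{a+w:a\in A\}$). *)

From HB Require Import structures.
From mathcomp Require Import all_boot all_order all_algebra.
From mathcomp Require Import all_classical all_reals all_analysis.
From mathcomp Require Import measurable_realfun.
Set Implicit Arguments. Unset Strict Implicit. Unset Printing Implicit Defensive.
Import Order.TTheory GRing.Theory Num.Theory.
Import numFieldNormedType.Exports.
Local Open Scope classical_set_scope.
Local Open Scope ring_scope.

Notation pt R := ((\bar R) * (\bar R))%type.

Section Defs.
Variable R : realType.

Definition Rp2 : set (pt R) := [set p | (0 <= p.1)%E /\ (0 <= p.2)%E].

Definition shift (A : set (pt R)) (w : pt R) : set (pt R) :=
  [set ((a.1 + w.1)%E, (a.2 + w.2)%E) | a in A].

Definition closed_corner (x y : \bar R) : set (pt R) :=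
  [set p | (x <= p.1)%E /\ (y <= p.2)%E].

Definition open_corner (x y : R) : set (pt R) :=
  [set p | (x%:E <= p.1 < +oo)%E /\ (y%:E <= p.2 < +oo)%E].

Definition corner_sets : set (set (pt R)) :=
  [set C | (exists x y : R, 0 <= x /\ 0 <= y /\ C = open_corner x y)
        \/ (exists x y : \bar R, (0 <= x)%E /\ (0 <= y)%E /\ C = closed_corner x y)].

Definition einv (r : R) : \bar R := if r == 0 then +oo%E else (r^-1)%:E.

Definition Sint (z : R -> R) (u v : R) : \bar R :=
  (\int[lebesgue_measure]_(s in `[u, v]%classic) einv (z s))%E.

Definition mass (zeta : R -> {finite_measure set (pt R) -> \bar R}) (t : R) : R :=
  fine (zeta t Rp2).

(** continuity of t |-> zeta(t) on [0,oo) for the weak topology on finite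
    measures on \bar R_+^2 (initial topology of the maps
    mu |-> \int f dmu, f continuous (hence bounded) on the compact \bar R_+^2) *)
Definition weakly_continuous (zeta : R -> {finite_measure set (pt R) -> \bar R}) :=
  forall f : pt R -> R, {within Rp2, continuous f} ->
    {within `[0, +oo[, continuous (fun t => (\int[zeta t]_(p in Rp2) (f p)%:E)%E)}.

Definition fluid_data (lam : R) (theta : probability (pt R) R)
    (zeta0 : {finite_measure set (pt R) -> \bar R}) : Prop :=
  [/\ 0 < lam,
      theta (~` Rp2) = 0%E /\
      theta [set p | p.1 = 0%E /\ (0 <= p.2)%E] = 0%E /\
      theta [set p | (0 <= p.1)%E /\ p.2 = 0%E] = 0%E /\
      theta [set (+oo%E, +oo%E)] = 0%E,
      (1 < lam%:E * \int[theta]_(p in Rp2) p.1)%E,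
      zeta0 (~` Rp2) = 0%E &
      forall x : R, 0 <= x ->
        zeta0 [set p | p.1 = x%:E /\ (0 <= p.2)%E] = 0%E /\
        zeta0 [set p | (0 <= p.1)%E /\ p.2 = x%:E] = 0%E].

Definition fluid_solution (lam : R) (theta : probability (pt R) R)
    (zeta0 : {finite_measure set (pt R) -> \bar R})
    (zeta : R -> {finite_measure set (pt R) -> \bar R}) : Prop :=
  [/\ forall t : R, 0 <= t -> zeta t (~` Rp2) = 0%E,
      weakly_continuous zeta,
      forall a : R, 0 < a -> exists c : R, 0 < c /\ forall t : R, a < t -> c <= mass zeta t &
      forall C, corner_sets C -> forall t : R, 0 <= t ->
        zeta t C =
          (zeta0 (shift C (Sint (mass zeta) 0 t, t%:E)) +
           lam%:E * \int[lebesgue_measure]_(s in `[0%R, t]%classic)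
              theta (shift C (Sint (mass zeta) s t, (t - s)%:E)))%E].

End Defs.

From Pilot Require Import Defs.
From HB Require Import structures.
From mathcomp Require Import all_boot all_order all_algebra.
From mathcomp Require Import all_classical all_reals all_analysis.
From mathcomp Require Import measurable_realfun.
Set Implicit Arguments.
Unset Strict Implicit.
Import Order.TTheory GRing.Theory Num.Theory.
Import numFieldNormedType.Exports.
Local Open Scope classical_set_scope.
Local Open Scope ring_scope.

(* The solution equation at time t0 + t for the corner [0,oo]^2 and the one at
   time t0 for the corner [S(t0,t0+t),oo] x [t,oo] have the same initial term,
   because S(0,t0) + S(t0,t0+t) = S(0,t0+t).  The arrival integral over
   [0,t0+t] splits at t0: the part over [0,t0] is the arrival term of the
   second equation, and the part over [t0,t0+t], translated by t0, is the
   arrival term of the restarted system.  Splitting and translating need the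
   integrands to be measurable; they are, being monotone in the arrival time. *)

Section lebesgue_translation.
Context {R : realType}.
Local Notation mu := (@lebesgue_measure R).

Let measurable_addr_const (c : R) :
  measurable_fun setT (+%R c : measurableTypeR R -> measurableTypeR R).
Proof. exact: measurable_funD. Qed.

Lemma lebesgue_measure_translation (c : R) (A : set R) : measurable A ->
  pushforward mu (+%R c : measurableTypeR R -> measurableTypeR R) A = mu A.
Proof.
move=> mA; apply/esym/lebesgue_measure_unique => // _ [[a b]] _ <-.
transitivity (mu `]a - c, b - c]%classic).
  rewrite !lebesgue_measure_itv /= !lte_fin ltrD2r.
  by case: ifP => // _; rewrite -!EFinD opprB addrA subrK.
by congr (mu _); apply/seteqP; split => x /=; rewrite !in_itv /= ltrBlDl lerBrDl.
Qed.

Lemma ge0_integral_itv_translation (a b c : R) (f : R -> \bar R) :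
  measurable_fun `[c + a, c + b] f ->
  (forall x, `[c + a, c + b]%classic x -> (0 <= f x)%E) ->
  (\int[mu]_(x in `[(c + a)%R, (c + b)%R]) f x =
   \int[mu]_(x in `[a, b]) f (c + x)%R)%E.
Proof.
move=> mf f0.
have -> : `[a, b]%classic = +%R c @^-1` `[c + a, c + b]%classic.
  by apply/seteqP; split => x /=; rewrite !in_itv /= !lerD2l.
rewrite -(ge0_integral_pushforward (measurable_addr_const c)) //; last first.
  by move=> x /set_mem; exact: f0.
apply: eq_measure_integral => //= A mA _.
by rewrite lebesgue_measure_translation.
Qed.

Lemma ge0_integral_itv_split (a b c : R) (f : R -> \bar R) : a <= b -> b <= c ->
  measurable_fun `[a, c] f -> (forall x, `[a, c]%classic x -> (0 <= f x)%E) ->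
  (\int[mu]_(x in `[a, c]) f x =
     \int[mu]_(x in `[a, b]) f x + \int[mu]_(x in `[b, c]) f x)%E.
Proof.
move=> ab bc mf f0.
have acE : `[a, c]%classic = `[a, b[%classic `|` `[b, c]%classic.
  by apply: itv_bndbnd_setU; rewrite bnd_simp.
rewrite acE ge0_integral_setU -?acE //; last first.
  apply: lt_disjoint => x y; rewrite !in_itv /= => /andP[_ xb] /andP[bx _].
  exact: lt_le_trans bx.
rewrite integral_itv_bndo_bndc //; apply: measurable_funS mf => //.
by rewrite acE; exact: subsetUl.
Qed.

End lebesgue_translation.

Lemma measurable_fun_itv_nondecreasing {R : realType} (a b : R) (f : R -> R) :
  {in `[a, b] &, {homo f : x y / x <= y}} -> measurable_fun `[a, b] f.
Proof.
move=> f_nd; have [ab|ba] := leP a b; last first.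
  by rewrite set_itv_ge ?bnd_simp -?ltNge //; exact: measurable_fun_set0.
pose clamp s := Num.min (Num.max s a) b.
have clamp_itv s : clamp s \in `[a, b].
  by rewrite in_itv /= le_min ge_min le_max !lexx ab !orbT.
have f_clamp_nd : {homo f \o clamp : x y / x <= y}.
  by move=> x y xy; apply: f_nd; rewrite ?clamp_itv //= le_min2 ?le_max2.
apply: eq_measurable_fun (nondecreasing_measurable _ f_clamp_nd) => //.
move=> x; rewrite inE /= in_itv /= => /andP[ax xb].
by rewrite /clamp /= max_l ?min_l.
Qed.

Section closed_corner.
Context {R : realType}.
Local Open Scope ereal_scope.

Lemma measurable_closed_corner (x y : \bar R) : measurable (closed_corner x y).
Proof.
have -> : closed_corner x y = `[x, +oo[ `*` `[y, +oo[.
  by apply/seteqP; split => p /=; rewrite !in_itv /= !andbT.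
by apply: measurableX; exact: emeasurable_itv.
Qed.

Lemma closed_corner_subset (x x' y y' : \bar R) : x <= x' -> y <= y' ->
  closed_corner x' y' `<=` closed_corner x y.
Proof.
by move=> xx' yy' p [/= p1 p2]; split; [exact: le_trans p1|exact: le_trans p2].
Qed.

Lemma shift_closed_corner (x y a : \bar R) (b : R) : 0 <= x -> 0 <= a ->
  Defs.shift (closed_corner x y) (a, b%:E) = closed_corner (x + a) (y + b%:E).
Proof.
move=> x0 a0; apply/seteqP; split => [p [q [q1 q2] <-]|[p1 p2] [/= p1x p2y]] /=.
  by split; [exact: leeD2r|exact: leeD2r].
have q2 : y <= p2 - b%:E by rewrite leeBrDr.
case: a a0 p1x => [r| |] //= r0 p1x.
  exists (p1 - r%:E, p2 - b%:E); first by split; rewrite leeBrDr.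
  by congr pair; rewrite subeK.
exists (x, p2 - b%:E); first by split.
have xNy : x != -oo by move: x0; case: (x).
rewrite [X in (_, X)]subeK // [X in (X, _)]addey //; congr pair.
by move: p1x; rewrite addey // leye_eq => /eqP.
Qed.

End closed_corner.

Lemma einv_ge0 {R : realType} (r : R) : 0 <= r -> (0 <= einv r)%E.
Proof.
by move=> r0; rewrite /einv; case: ifP => // _; rewrite lee_fin invr_ge0.
Qed.

Section Sint.
Context {R : realType}.
Variable z : R -> R.
Hypothesis z_ge0 : forall s, 0 <= z s.
Hypothesis measurable_einv_z :
  measurable_fun (`[0, +oo[ : set R) (fun s => einv (z s)).

Let einv_z_ge0 s : (0 <= einv (z s))%E.
Proof. exact: einv_ge0. Qed.

Let measurable_einv_z_itv (u v : R) : 0 <= u ->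
  measurable_fun `[u, v] (fun s => einv (z s)).
Proof.
move=> u0; apply: measurable_funS measurable_einv_z => // s /=.
by rewrite !in_itv /= andbT => /andP[us _]; exact: le_trans us.
Qed.

Lemma Sint_ge0 u v : (0 <= Sint z u v)%E.
Proof. by apply: integral_ge0 => s _. Qed.

Lemma Sint_split u v w : 0 <= u -> u <= v -> v <= w ->
  Sint z u w = (Sint z u v + Sint z v w)%E.
Proof.
move=> u0 uv vw; apply: ge0_integral_itv_split => //.
exact: measurable_einv_z_itv.
Qed.

Lemma Sint_translation c u v : 0 <= c -> 0 <= u ->
  Sint (fun r => z (c + r)) u v = Sint z (c + u) (c + v).
Proof.
move=> c0 u0; rewrite /Sint ge0_integral_itv_translation //.
exact: measurable_einv_z_itv (addr_ge0 c0 u0).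
Qed.

Section corner_measure.
Variable P : {finite_measure set (pt R) -> \bar R}.
Variable T : R.

Let corner_measure s := P (closed_corner (Sint z s T) (T - s)%:E).

Lemma corner_measure_nondecreasing :
  {in `[0, T] &, {homo corner_measure : s1 s2 / s1 <= s2 >-> (s1 <= s2)%E}}.
Proof.
move=> s1 s2; rewrite !in_itv /= => /andP[s10 _] /andP[_ s2T] s12.
apply/le_measure; rewrite ?inE; try exact: measurable_closed_corner.
apply: closed_corner_subset; last by rewrite lee_fin lerB.
by rewrite (Sint_split s10 s12 s2T) leeDr // Sint_ge0.
Qed.

Lemma measurable_corner_measure : measurable_fun `[0%R, T] corner_measure.
Proof.
have fin s : corner_measure s \is a fin_num.
  exact: fin_num_measure (measurable_closed_corner _ _).
apply: (eq_measurable_fun (EFin \o fine \o corner_measure)).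
  by move=> s _ /=; rewrite fineK.
apply/measurable_EFinP; apply: measurable_fun_itv_nondecreasing.
move=> s1 s2 s1T s2T s12 /=; apply: fine_le; rewrite ?fin //.
exact: corner_measure_nondecreasing.
Qed.

End corner_measure.
End Sint.

Lemma measurable_einv_continuous {R : realType} (a : R) (f : R -> R) :
  {in `]a, +oo[, continuous f} -> {in `]a, +oo[, forall t, f t != 0} ->
  measurable_fun `[a, +oo[ (fun s => einv (f s)).
Proof.
move=> f_cont f_neq0; rewrite -(@setU1itv _ _ _ _ false) //.
apply/measurable_funU => //; split; first exact: measurable_fun_set1.
apply: (eq_measurable_fun (fun s => ((f s)^-1)%:E)).
  by move=> s /[!inE] s_itv; rewrite /einv (negbTE (f_neq0 _ s_itv)).
apply/measurable_EFinP; apply: open_continuous_measurable_fun.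
  exact: interval_open.
by move=> s /set_mem s_itv; exact: cvgV (f_neq0 _ s_itv) (f_cont _ s_itv).
Qed.

Section fluid_solution.
Context {R : realType}.
Variables (lam : R) (theta : probability (pt R) R).
Variables (zeta0 : {finite_measure set (pt R) -> \bar R})
  (zeta : R -> {finite_measure set (pt R) -> \bar R}).
Hypothesis solution : fluid_solution lam theta zeta0 zeta.
Local Notation z := (mass zeta).

Lemma mass_ge0 t : 0 <= z t.
Proof. exact/fine_ge0/measure_ge0. Qed.

Lemma massE t : (z t)%:E = zeta t (@Rp2 R).
Proof.
by rewrite /mass fineK //; exact: fin_num_measure (measurable_closed_corner 0 0).
Qed.

Lemma mass_gt0 t : 0 < t -> 0 < z t.
Proof.
case: solution => _ _ mass_bounded _ t_gt0.
have [c [c_gt0 c_le]] := mass_bounded (t / 2) (divr_gt0 t_gt0 (ltr0Sn _ 1)).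
by apply: lt_le_trans c_gt0 (c_le _ _); rewrite ltr_pdivrMr // ltr_pMr // ltr1n.
Qed.

Lemma mass_continuous : {in `]0, +oo[, continuous z}.
Proof.
case: solution => _ weak_cont _ _.
have cst1 : {within @Rp2 R, continuous (fun=> 1 : R)}.
  by apply: continuous_subspaceT => p; exact: cvg_cst.
have integral1E : (fun t => \int[zeta t]_(p in @Rp2 R) ((fun=> 1 : R) p)%:E)%E =
                  EFin \o z.
  apply/funext => t /=; rewrite massE integral_cst ?mul1e //.
  exact: measurable_closed_corner.
have pos_nonneg : `]0, +oo[%classic `<=` (`[0, +oo[%classic : set R).
  by apply: subset_itvr; rewrite bnd_simp.
have := continuous_subspaceW pos_nonneg (weak_cont _ cst1).
rewrite integral1E continuous_open_subspace; last exact: interval_open.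
move=> EFin_z_cont t t_pos.
by have /fine_cvg := EFin_z_cont t (mem_set t_pos).
Qed.

Lemma measurable_einv_mass :
  measurable_fun (`[0, +oo[ : set R) (fun s => einv (z s)).
Proof.
apply: measurable_einv_continuous; first exact: mass_continuous.
by move=> t; rewrite in_itv /= andbT => /mass_gt0 /lt0r_neq0.
Qed.

Lemma solution_closed_corner (x y : \bar R) u :
  (0 <= x)%E -> (0 <= y)%E -> 0 <= u ->
  zeta u (closed_corner x y) =
    (zeta0 (closed_corner (x + Sint z 0 u) (y + u%:E)) +
     lam%:E * \int[lebesgue_measure]_(s in `[0%R, u])
       theta (closed_corner (x + Sint z s u) (y + (u - s)%:E)))%E.
Proof.
move=> x0 y0 u0; case: solution => _ _ _ -> //; last by right; exists x, y.
rewrite shift_closed_corner ?Sint_ge0 //; last exact: mass_ge0.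
congr (_ + _ * _)%E; apply: eq_integral => s _.
by rewrite shift_closed_corner ?Sint_ge0 //; exact: mass_ge0.
Qed.

Lemma mass_solution u : 0 <= u ->
  (z u)%:E =
    (zeta0 (closed_corner (Sint z 0 u) u%:E) +
     lam%:E * \int[lebesgue_measure]_(s in `[0%R, u])
       theta (closed_corner (Sint z s u) (u - s)%:E))%E.
Proof.
move=> u0; rewrite massE (@solution_closed_corner 0 0) // !add0e.
by congr (_ + _ * _)%E; apply: eq_integral => s _; rewrite !add0e.
Qed.

Section restart.
Variables t0 t : R.
Hypotheses (t0_ge0 : 0 <= t0) (t_ge0 : 0 <= t).

Lemma restart_closed_corner :
  zeta t0 (closed_corner (Sint z t0 (t0 + t)) t%:E) =
    (zeta0 (closed_corner (Sint z 0 (t0 + t)) (t0 + t)%:E) +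
     lam%:E * \int[lebesgue_measure]_(s in `[0%R, t0])
       theta (closed_corner (Sint z s (t0 + t)) (t0 + t - s)%:E))%E.
Proof.
have t0_le : t0 <= t0 + t by rewrite lerDl.
rewrite solution_closed_corner ?Sint_ge0 ?lee_fin //; last exact: mass_ge0.
rewrite [Sint _ t0 _ + _]addeC -(Sint_split mass_ge0 measurable_einv_mass) //.
rewrite -EFinD [t + t0]addrC; congr (_ + _ * _)%E.
apply: eq_integral => s /[!inE] /andP[s_ge0 s_le].
rewrite [Sint _ t0 _ + _]addeC -(Sint_split mass_ge0 measurable_einv_mass) //.
by rewrite -EFinD addrA [t + t0]addrC.
Qed.

Lemma restart_corner_integral :
  (\int[lebesgue_measure]_(s in `[0%R, t])
     theta (closed_corner (Sint (fun r => z (t0 + r)) s t) (t - s)%:E) =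
   \int[lebesgue_measure]_(s in `[t0, (t0 + t)%R])
     theta (closed_corner (Sint z s (t0 + t)) (t0 + t - s)%:E))%E.
Proof.
have -> : `[t0, (t0 + t)%R]%classic = `[(t0 + 0)%R, (t0 + t)%R]%classic.
  by rewrite addr0.
rewrite ge0_integral_itv_translation; first last.
- by move=> s _; exact: measure_ge0.
- have := measurable_corner_measure mass_ge0 measurable_einv_mass theta
    (T := t0 + t).
  apply: measurable_funS => //.
  by apply: subset_itvr; rewrite bnd_simp addr0.
apply: eq_integral => s /[!inE] /andP[s_ge0 _].
rewrite Sint_translation //.
- by rewrite opprD addrACA subrr add0r.
- exact: mass_ge0.
- exact: measurable_einv_mass.
Qed.

End restart.

End fluid_solution.

Theorem mainTheorem4 (R : realType) (lam : R) (theta : probability (pt R) R)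
    (zeta0 : {finite_measure set (pt R) -> \bar R})
    (zeta : R -> {finite_measure set (pt R) -> \bar R}) (t0 : R) :
  fluid_data lam theta zeta0 ->
  fluid_solution lam theta zeta0 zeta ->
  0 < t0 ->
  let z0 := fun t => mass zeta (t0 + t) in
  forall t, 0 <= t ->
    (z0 t)%:E =
      (zeta t0 (closed_corner (Sint z0 0 t) t%:E) +
       lam%:E * \int[lebesgue_measure]_(s in `[0%R, t]%classic)
          theta (closed_corner (Sint z0 s t) (t - s)%:E))%E.
Proof.
move=> _ solution /ltW t0_ge0 z0 t t_ge0.
have measurable_einv := measurable_einv_mass solution.
rewrite /z0 Sint_translation ?addr0 //; last exact: mass_ge0.
rewrite (restart_closed_corner solution) // (restart_corner_integral solution) //.
rewrite (mass_solution solution) ?addr_ge0 //.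
rewrite (ge0_integral_itv_split (b := t0)) ?lerDl //.
- by rewrite ge0_muleDr ?addeA // integral_ge0.
- by have := measurable_corner_measure (mass_ge0 zeta) measurable_einv theta
    (T := t0 + t).
Qed.
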